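(* Let $W$ be any matrix and $A$ any full rank matrix with the same number of columns as $W$, and let $D$ be a square diagonal matrix (with as many rows as $A$) all of whose diagonal entries are at least $1$. Then $\|W(DA)^+\|_F\le\|WA^+\|_F$.
   Context: $M^+$ denotes the Moore–Penrose pseudo-inverse of $M$ and $\|\cdot\|_F$ the Frobenius norm. *)

From HB Require Import structures.
From mathcomp Require Import all_boot all_order all_algebra.
From Stdlib Require Import ClassicalEpsilon.
Set Implicit Arguments. Unset Strict Implicit. Unset Printing Implicit Defensive.
Import Order.TTheory GRing.Theory Num.Theory.
Local Open Scope ring_scope.

Definition is_mp_inverse (R : rcfType) (m n : nat)
  (A : 'M[R]_(m, n)) (X : 'M[R]_(n, m)) : Prop :=
  [/\ A *m X *m A = A, X *m A *m X = X,
      (A *m X)^T = A *m X & (X *m A)^T = X *m A].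

(* The Moore–Penrose pseudo-inverse A^+ (exists and is unique for real matrices). *)
Definition mpinv (R : rcfType) (m n : nat) (A : 'M[R]_(m, n)) : 'M[R]_(n, m) :=
  epsilon (inhabits 0) (is_mp_inverse A).

Definition frob (R : rcfType) (m n : nat) (M : 'M[R]_(m, n)) : R :=
  Num.sqrt (\sum_(i < m) \sum_(j < n) M i j ^+ 2).

Definition full_rank (R : fieldType) (m n : nat) (A : 'M[R]_(m, n)) : bool :=
  \rank A == minn m n.

(* Write B = DA and E = D^-1, a diagonal matrix with entries in (0, 1].
   If A has full row rank then A A^+ = 1, and A^+ E satisfies the Penrose
   conditions for B, so W B^+ = (W A^+) E only shrinks columns.
   If A has full column rank then A^+ E is a left inverse of B, and B^+ is
   the left inverse minimising ||W Z||_F: writing Z = B^+ + K with K B = 0,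
   the rows of W B^+ lie in the row space of B^T, hence are orthogonal to
   those of W K. *)
From mathcomp Require Import all_boot all_order all_algebra.
From Stdlib Require Import ClassicalEpsilon.
Set Implicit Arguments. Unset Strict Implicit. Unset Printing Implicit Defensive.
Import Order.TTheory GRing.Theory Num.Theory.
Local Open Scope ring_scope.

Lemma mxtrace_mulmx_trmx (R : pzRingType) (k l : nat) (M : 'M[R]_(k, l)) :
  \tr (M *m M^T) = \sum_(i < k) \sum_(j < l) M i j ^+ 2.
Proof.
apply: eq_bigr => i _; rewrite mxE.
by apply: eq_bigr => j _; rewrite mxE expr2.
Qed.

Lemma mxtrace_mulmx_trmx_ge0 (R : realDomainType) (k l : nat) (M : 'M[R]_(k, l)) :
  0 <= \tr (M *m M^T).
Proof.
rewrite mxtrace_mulmx_trmx sumr_ge0 // => i _.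
by rewrite sumr_ge0 // => j _; exact: sqr_ge0.
Qed.

Lemma mulmx_trmx_eq0 (R : realDomainType) (k l : nat) (M : 'M[R]_(k, l)) :
  M *m M^T = 0 -> M = 0.
Proof.
move=> MMt0; apply/matrixP => i j; rewrite mxE.
have /eqP := congr1 (fun N : 'M[R]_k => N i i) MMt0; rewrite !mxE.
under eq_bigr => j' _ do rewrite mxE -expr2.
rewrite psumr_eq0 => [/allP/(_ j (mem_index_enum j))|j' _]; last exact: sqr_ge0.
by rewrite sqrf_eq0 => /eqP.
Qed.

Lemma row_free_mulmx_trmx_unit (R : realFieldType) (m n : nat) (A : 'M[R]_(m, n)) :
  row_free A -> A *m A^T \in unitmx.
Proof.
move=> freeA; rewrite -row_free_unit; apply: inj_row_free => v vAAt0.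
have vA0 : v *m A = 0.
  by apply: mulmx_trmx_eq0; rewrite trmx_mul mulmxA -(mulmxA v) vAAt0 mul0mx.
by apply: (row_free_inj freeA); rewrite vA0 mul0mx.
Qed.

Lemma full_rank_free_or_full (F : fieldType) (m n : nat) (A : 'M[F]_(m, n)) :
  full_rank A -> row_free A \/ row_full A.
Proof.
rewrite /full_rank /row_free /row_full => /eqP ->.
by case: leqP; [left | right].
Qed.

Lemma diag_inv_mulmx (F : fieldType) (m : nat) (D : 'M[F]_m) :
  is_diag_mx D -> (forall i, D i i != 0) ->
  diag_mx (\row_i (D i i)^-1) *m D = 1%:M.
Proof.
move=> /is_diag_mxP Ddiag Dnz; apply/matrixP => i j; rewrite mul_diag_mx !mxE.
by case: (eqVneq i j) => [<-|ij]; rewrite ?mulVf ?(Ddiag i j) ?mulr0.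
Qed.

Section Frobenius.
Variable R : rcfType.

Lemma frobE (k l : nat) (M : 'M[R]_(k, l)) :
  frob M = Num.sqrt (\tr (M *m M^T)).
Proof. by rewrite mxtrace_mulmx_trmx. Qed.

Lemma frob_le_add_orth (k l : nat) (M N : 'M[R]_(k, l)) :
  M *m N^T = 0 -> frob M <= frob (M + N).
Proof.
move=> MNt0; have NMt0 : N *m M^T = 0 by rewrite -[N]trmxK -trmx_mul MNt0 trmx0.
rewrite !frobE ler_sqrt ?mxtrace_mulmx_trmx_ge0 //.
rewrite linearD mulmxDl !mulmxDr MNt0 NMt0 addr0 add0r mxtraceD lerDl.
exact: mxtrace_mulmx_trmx_ge0.
Qed.

Lemma frob_mulmx_diag_le (k l : nat) (M : 'M[R]_(k, l)) (e : 'rV[R]_l) :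
  (forall j, `|e 0 j| <= 1) -> frob (M *m diag_mx e) <= frob M.
Proof.
move=> e_le1; rewrite !frobE ler_sqrt ?mxtrace_mulmx_trmx_ge0 //.
rewrite !mxtrace_mulmx_trmx mul_mx_diag.
apply: ler_sum => i _; apply: ler_sum => j _.
rewrite mxE exprMn ler_piMr ?sqr_ge0 // -real_normK ?num_real //.
by rewrite exprn_ile1.
Qed.

End Frobenius.

Section MoorePenrose.
Variable R : rcfType.

Lemma mp_inverse_tr (m n : nat) (A : 'M[R]_(m, n)) (X : 'M[R]_(n, m)) :
  is_mp_inverse A X -> is_mp_inverse A^T X^T.
Proof.
case=> AXA XAX AXsym XAsym.
by split; rewrite -!trmx_mul ?mulmxA ?AXA ?XAX ?XAsym // trmxK.
Qed.

Lemma mp_inverse_absorb (m n : nat) (A : 'M[R]_(m, n)) (X Y : 'M[R]_(n, m)) :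
  is_mp_inverse A X -> is_mp_inverse A Y -> X = X *m A *m Y.
Proof.
case=> _ XAX AXsym _ [AYA _ AYsym _]; symmetry.
transitivity (X *m (A *m X)^T *m (A *m Y)^T).
  by rewrite AXsym AYsym !mulmxA XAX.
by rewrite -mulmxA -trmx_mul mulmxA AYA AXsym mulmxA XAX.
Qed.

Lemma mp_inverse_unique (m n : nat) (A : 'M[R]_(m, n)) (X Y : 'M[R]_(n, m)) :
  is_mp_inverse A X -> is_mp_inverse A Y -> X = Y.
Proof.
move=> AX AY; rewrite (mp_inverse_absorb AX AY); apply: trmx_inj.
rewrite !trmx_mul mulmxA; symmetry.
exact: mp_inverse_absorb (mp_inverse_tr AY) (mp_inverse_tr AX).
Qed.

Lemma mpinvE (m n : nat) (A : 'M[R]_(m, n)) (X : 'M[R]_(n, m)) :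
  is_mp_inverse A X -> mpinv A = X.
Proof.
move=> AX; apply: (mp_inverse_unique _ AX).
by apply: epsilon_spec; exists X.
Qed.

Lemma mp_inverse_row_free (m n : nat) (A : 'M[R]_(m, n)) :
  row_free A -> is_mp_inverse A (A^T *m invmx (A *m A^T)).
Proof.
move=> /row_free_mulmx_trmx_unit AAtU.
have AX1 : A *m (A^T *m invmx (A *m A^T)) = 1%:M by rewrite mulmxA mulmxV.
split; rewrite ?AX1 ?mul1mx ?trmx1 //; first by rewrite -!mulmxA AX1 mulmx1.
by rewrite !trmx_mul trmxK trmx_inv trmx_mul trmxK mulmxA.
Qed.

Lemma mp_inverse_row_full (m n : nat) (A : 'M[R]_(m, n)) :
  row_full A -> is_mp_inverse A (invmx (A^T *m A) *m A^T).
Proof.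
rewrite /row_full -mxrank_tr => /mp_inverse_row_free/mp_inverse_tr XA.
by rewrite trmx_mul trmx_inv trmx_mul !trmxK in XA.
Qed.

Lemma mpinv_row_free (m n : nat) (A : 'M[R]_(m, n)) :
  row_free A -> is_mp_inverse A (mpinv A).
Proof. by move=> /mp_inverse_row_free XA; rewrite (mpinvE XA). Qed.

Lemma mpinv_row_full (m n : nat) (A : 'M[R]_(m, n)) :
  row_full A -> is_mp_inverse A (mpinv A).
Proof. by move=> /mp_inverse_row_full XA; rewrite (mpinvE XA). Qed.

Lemma mp_inverse_row_free_mulmxV (m n : nat) (A : 'M[R]_(m, n)) (X : 'M[R]_(n, m)) :
  row_free A -> is_mp_inverse A X -> A *m X = 1%:M.
Proof.
by move=> freeA [AXA _ _ _]; apply: (row_free_inj freeA); rewrite AXA mul1mx.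
Qed.

Lemma mp_inverse_row_full_mulVmx (m n : nat) (A : 'M[R]_(m, n)) (X : 'M[R]_(n, m)) :
  row_full A -> is_mp_inverse A X -> X *m A = 1%:M.
Proof.
by move=> fullA [AXA _ _ _]; apply: (row_full_inj fullA); rewrite mulmxA AXA mulmx1.
Qed.

Lemma mp_inverse_mulmx_left (m n : nat) (A : 'M[R]_(m, n)) (X : 'M[R]_(n, m))
    (D E : 'M[R]_m) :
  is_mp_inverse A X -> A *m X = 1%:M -> E *m D = 1%:M ->
  is_mp_inverse (D *m A) (X *m E).
Proof.
case=> AXA XAX _ XAsym AX1 ED1.
have XEDA : X *m E *m (D *m A) = X *m A by rewrite mulmxA -(mulmxA X) ED1 mulmx1.
have DAXE1 : D *m A *m (X *m E) = 1%:M.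
  by rewrite -mulmxA (mulmxA A) AX1 mul1mx mulmx1C.
by split; rewrite ?XEDA ?DAXE1 ?mul1mx ?trmx1 // mulmxA XAX.
Qed.

Lemma frob_mp_inverse_min (p m n : nat) (W : 'M[R]_(p, n)) (B : 'M[R]_(m, n))
    (Y Z : 'M[R]_(n, m)) :
  is_mp_inverse B Y -> Z *m B = Y *m B -> frob (W *m Y) <= frob (W *m Z).
Proof.
case=> _ YBY BYsym _ ZB_YB; set K := Z - Y.
have KB0 : K *m B = 0 by rewrite mulmxBl ZB_YB subrr.
have YKt0 : Y *m K^T = 0.
  have -> : Y = Y *m Y^T *m B^T by rewrite -mulmxA -trmx_mul BYsym mulmxA YBY.
  by rewrite -mulmxA -trmx_mul KB0 trmx0 mulmx0.
have -> : W *m Z = W *m Y + W *m K by rewrite -mulmxDr addrC subrK.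
apply: frob_le_add_orth.
by rewrite trmx_mul mulmxA -(mulmxA W) YKt0 mulmx0 mul0mx.
Qed.

End MoorePenrose.

Theorem mainTheorem6 (R : rcfType) (p m n : nat)
  (W : 'M[R]_(p, n)) (A : 'M[R]_(m, n)) (D : 'M[R]_m) :
  full_rank A ->
  is_diag_mx D ->
  (forall i : 'I_m, 1 <= D i i) ->
  frob (W *m mpinv (D *m A)) <= frob (W *m mpinv A).
Proof.
move=> /full_rank_free_or_full rankA Ddiag D_ge1.
have D_gt0 i : 0 < D i i by apply: lt_le_trans (D_ge1 i).
set E := diag_mx (\row_i (D i i)^-1).
have ED1 : E *m D = 1%:M by apply: diag_inv_mulmx => // i; rewrite gt_eqF.
have E_le1 j : `|(\row_i (D i i)^-1) 0 j| <= 1.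
  by rewrite mxE ger0_norm ?invf_le1 // invr_ge0 ltW.
case: rankA => [freeA | fullA].
  have XA := mpinv_row_free freeA.
  have AX1 := mp_inverse_row_free_mulmxV freeA XA.
  rewrite (mpinvE (mp_inverse_mulmx_left XA AX1 ED1)) mulmxA.
  exact: frob_mulmx_diag_le.
have fullDA : row_full (D *m A).
  have fullD : row_full D by rewrite row_full_unit; case: (mulmx1_unit ED1).
  by rewrite /row_full (eqmxMfull _ fullD).
have YDA := mpinv_row_full fullDA.
have ZDA : mpinv A *m E *m (D *m A) = mpinv (D *m A) *m (D *m A).
  rewrite (mp_inverse_row_full_mulVmx fullDA YDA) -mulmxA (mulmxA E) ED1 mul1mx.
  exact: mp_inverse_row_full_mulVmx (mpinv_row_full fullA).
apply: le_trans (frob_mp_inverse_min W YDA ZDA) _.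
by rewrite mulmxA; exact: frob_mulmx_diag_le.
Qed.
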